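(* Let $A_1,\dots,A_m\in\mathbb{S}^n$, $b\in\mathbb{R}^m$, $C\in\mathbb{S}^n$, let Assumption 1 hold for some $p$, and assume $\mathcal{C}$ is compact. Let $f^\star$ be the optimal value of (SDP) and $R=\max_{X\in\mathcal{C}}\operatorname{tr}(X)<\infty$. For any $Y\in\mathcal{M}_p$, if $\|\operatorname{grad}g(Y)\|\le\varepsilon_g$ and $S(Y)\succeq-\frac{\varepsilon_H}{2}I_n$, then $0\le2(g(Y)-f^\star)\le\varepsilon_HR+\varepsilon_g\sqrt{R}$. If $I_n\in\operatorname{im}(\mathcal{A}^* )$, the right-hand side can be replaced by $\varepsilon_HR$; this holds in particular if all $X\in\mathcal{C}$ have the same trace and $\mathcal{C}$ contains a positive definite matrix.
   Context: $\mathbb{S}^n$: real symmetric $n\times n$ matrices; $\langle U,V\rangle=\operatorname{tr}(U^\top V)$, $\|\cdot\|$ Frobenius norm. $\mathcal{A}(X)_i=\langle A_i,X\rangle$, $\mathcal{A}^*(\nu)=\sum_i\nu_iA_i$. $\mathcal{C}=\{X\in\mathbb{S}^n:\mathcal{A}(X)=b,\ X\succeq0\}$ (non-empty); (SDP): minimize $\langle C,X\rangle$ over $\mathcal{C}$. $\mathcal{M}_p=\{Y\in\mathbb{R}^{n\times p}:\mathcal{A}(YY^\top)=b\}$, $g(Y)=\langle CY,Y\rangle$. Assumption 1 (for $p$): either (a) $A_1Y,\dots,A_mY$ are linearly independent for all $Y\in\mathcal{M}_p$, or (b) $\operatorname{span}\{A_1Y,\dots,A_mY\}$ has constant dimension on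 an open neighborhood of $\mathcal{M}_p$ in $\mathbb{R}^{n\times p}$. For $Y\in\mathcal{M}_p$: $G_{ij}=\langle A_iY,A_jY\rangle$, $\mu=G^\dagger\mathcal{A}(CYY^\top)$, $S(Y)=C-\mathcal{A}^*(\mu)$; the Riemannian gradient is $\operatorname{grad}g(Y)=2S(Y)Y$. *)

From HB Require Import structures.
From mathcomp Require Import all_boot all_order all_algebra.
From mathcomp Require Import all_classical all_reals all_analysis.
Set Implicit Arguments. Unset Strict Implicit. Unset Printing Implicit Defensive.
Import Order.TTheory GRing.Theory Num.Theory numFieldNormedType.Exports.
Local Open Scope ring_scope.
Local Open Scope classical_set_scope.

Section Defs.
Variable R : realType.

Definition frob {k l : nat} (U V : 'M[R]_(k, l)) : R := \tr (U^T *m V).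
Definition frob_norm {k l : nat} (U : 'M[R]_(k, l)) : R := Num.sqrt (frob U U).

Definition sym_mx {n : nat} (X : 'M[R]_n) : Prop := X^T = X.

Definition psd {n : nat} (X : 'M[R]_n) : Prop :=
  sym_mx X /\ forall v : 'cV[R]_n, 0 <= (v^T *m X *m v) 0 0.
Definition pd {n : nat} (X : 'M[R]_n) : Prop :=
  sym_mx X /\ forall v : 'cV[R]_n, v != 0 -> 0 < (v^T *m X *m v) 0 0.

Definition calA {n m : nat} (A : 'I_m -> 'M[R]_n) (X : 'M[R]_n) : 'cV[R]_m :=
  \col_i frob (A i) X.
Definition calA_adj {n m : nat} (A : 'I_m -> 'M[R]_n) (nu : 'cV[R]_m) : 'M[R]_n :=
  \sum_i nu i 0 *: A i.

Definition feas {n m : nat} (A : 'I_m -> 'M[R]_n) (b : 'cV[R]_m) : set 'M[R]_n :=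
  [set X | calA A X = b /\ psd X].

Definition Mp {n m p : nat} (A : 'I_m -> 'M[R]_n) (b : 'cV[R]_m) : set 'M[R]_(n, p) :=
  [set Y | calA A (Y *m Y^T) = b].

Definition gobj {n p : nat} (C : 'M[R]_n) (Y : 'M[R]_(n, p)) : R := frob (C *m Y) Y.

Definition AYmx {n m p : nat} (A : 'I_m -> 'M[R]_n) (Y : 'M[R]_(n, p)) : 'M[R]_(m, n * p) :=
  \matrix_i mxvec (A i *m Y).

Definition assumption1 {n m : nat} (p : nat) (A : 'I_m -> 'M[R]_n) (b : 'cV[R]_m) : Prop :=
  (forall Y : 'M[R]_(n, p), Mp A b Y -> row_free (AYmx A Y))
  \/ (exists (U : set 'M[R]_(n, p)) (r : nat),
        open U /\ Mp A b `<=` U /\ forall Y, U Y -> \rank (AYmx A Y) = r).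

Definition gram {n m p : nat} (A : 'I_m -> 'M[R]_n) (Y : 'M[R]_(n, p)) : 'M[R]_m :=
  \matrix_(i, j) frob (A i *m Y) (A j *m Y).

Definition is_mp_pinv {k : nat} (G Gd : 'M[R]_k) : Prop :=
  [/\ G *m Gd *m G = G, Gd *m G *m Gd = Gd,
      (G *m Gd)^T = G *m Gd & (Gd *m G)^T = Gd *m G].

Definition Smat {n m p : nat} (A : 'I_m -> 'M[R]_n) (C : 'M[R]_n)
  (Y : 'M[R]_(n, p)) (Gd : 'M[R]_m) : 'M[R]_n :=
  C - calA_adj A (Gd *m calA A (C *m Y *m Y^T)).

Definition rgrad {n m p : nat} (A : 'I_m -> 'M[R]_n) (C : 'M[R]_n)
  (Y : 'M[R]_(n, p)) (Gd : 'M[R]_m) : 'M[R]_(n, p) :=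
  2 *: (Smat A C Y Gd *m Y).

End Defs.

From HB Require Import structures.
From mathcomp Require Import all_boot all_order all_algebra.
From mathcomp Require Import all_classical all_reals all_analysis.
From mathcomp Require Import ring lra.
Import Order.TTheory GRing.Theory Num.Theory numFieldNormedType.Exports.
Local Open Scope ring_scope.
Local Open Scope classical_set_scope.
Set Implicit Arguments. Unset Strict Implicit. Unset Printing Implicit Defensive.

(* For feasible X, <C, X> = <S, X> + <mu, b> with S = S(Y), so that
   g(Y) - f* = <S Y, Y> - <S, X*> for an optimal X*.  Since S + eps_H/2 I and
   X* are positive semidefinite, -<S, X*> <= eps_H/2 tr X* <= eps_H R / 2, and
   2 <S Y, Y> = <grad g(Y), Y> <= eps_g ||Y|| with ||Y||^2 = tr (Y Y^T) <= R.
   If I = A^*(nu) then Y = sum_i nu_i A_i Y, while S Y is orthogonal to every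
   A_i Y because G G^+ is the identity on the range of G; so <S Y, Y> = 0.
   Finally im A^* = (ker A)^perp: if the trace is constant on the feasible set
   and X0 is a positive definite feasible point, then for symmetric Z in ker A
   the matrix X0 - t Z is feasible for small t > 0, whence tr Z = <I, Z> = 0. *)

Section Frobenius.
Variables (R : realType) (k l : nat).
Implicit Types U V W : 'M[R]_(k, l).

Fact frob_is_linear U : linear_for *%R (frob U).
Proof. by move=> a V W; rewrite /frob mulmxDr -scalemxAr mxtraceD mxtraceZ. Qed.

HB.instance Definition _ U :=
  GRing.isLinear.Build R 'M[R]_(k, l) R *%R (frob U) (frob_is_linear U).

Lemma frobE U V : frob U V = \sum_i \sum_j U i j * V i j.
Proof.
rewrite /frob /mxtrace exchange_big; apply: eq_bigr => j _.
by rewrite mxE; apply: eq_bigr => i _; rewrite mxE.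
Qed.

Lemma frobC U V : frob U V = frob V U.
Proof. by rewrite !frobE; apply: eq_bigr => i _; apply: eq_bigr => j _; rewrite mulrC. Qed.

Lemma frobZr a U V : frob U (a *: V) = a * frob U V.
Proof. exact: linearZ. Qed.

Lemma frobBr U V W : frob U (V - W) = frob U V - frob U W.
Proof. exact: linearB. Qed.

Lemma frobDl U V W : frob (V + W) U = frob V U + frob W U.
Proof. by rewrite frobC linearD /= !(frobC U). Qed.

Lemma frobZl a U V : frob (a *: V) U = a * frob V U.
Proof. by rewrite frobC frobZr frobC. Qed.

Lemma frobBl U V W : frob (V - W) U = frob V U - frob W U.
Proof. by rewrite frobC frobBr !(frobC U). Qed.

Lemma frob_suml U m (F : 'I_m -> 'M[R]_(k, l)) :
  frob (\sum_i F i) U = \sum_i frob (F i) U.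
Proof. by rewrite frobC linear_sum; apply: eq_bigr => i _; rewrite frobC. Qed.

Lemma frob_mxvec U V : frob U V = (mxvec U *m (mxvec V)^T) 0 0.
Proof.
rewrite frobE mxE pair_bigA /= (reindex _ (curry_mxvec_bij _ _)) /=.
by apply: eq_bigr => -[i j] _ /=; rewrite !mxE !mxvecE.
Qed.

Lemma frob_ge0 U : 0 <= frob U U.
Proof. by rewrite frobE; do 2!(apply: sumr_ge0 => ? _); rewrite -expr2 sqr_ge0. Qed.

Lemma frob_eq0 U : (frob U U == 0) = (U == 0).
Proof.
apply/idP/eqP => [|->]; last by rewrite linear0.
have sq_ge0 (x : R) : 0 <= x * x by rewrite -expr2 sqr_ge0.
rewrite frobE psumr_eq0 => [/allP U0|i _]; last by apply: sumr_ge0 => j _.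
apply/matrixP => i j; move/implyP: (U0 i (mem_index_enum _)) => /(_ isT).
rewrite psumr_eq0 // => /allP/(_ j (mem_index_enum _))/implyP/(_ isT).
by rewrite mulf_eq0 orbb mxE => /eqP.
Qed.

Lemma frob_norm_ge0 U : 0 <= frob_norm U.
Proof. exact: sqrtr_ge0. Qed.

Lemma frob_sqr_le U V : frob U V ^+ 2 <= frob U U * frob V V.
Proof.
have [/eqP|V0] := eqVneq (frob V V) 0.
  by rewrite frob_eq0 => /eqP->; rewrite !linear0 expr0n mulr0.
have V_gt0 : 0 < frob V V by rewrite lt_def V0 frob_ge0.
have := frob_ge0 (frob V V *: U - frob U V *: V).
rewrite !(frobBl, frobBr, frobZl, frobZr) (frobC V U) => H.
have : 0 <= frob V V * (frob U U * frob V V - frob U V ^+ 2).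
  by move: H; congr (_ <= _); ring.
by rewrite pmulr_rge0 // subr_ge0.
Qed.

Lemma frob_CauchySchwarz U V : frob U V <= frob_norm U * frob_norm V.
Proof.
rewrite /frob_norm -sqrtrM ?frob_ge0 //; apply: le_trans (ler_norm _) _.
by rewrite -sqrtr_sqr ler_sqrt ?frob_sqr_le ?mulr_ge0 ?frob_ge0.
Qed.

End Frobenius.

Section FrobeniusProducts.
Variable R : realType.

Lemma frob_mulmx_tr k l q (M : 'M[R]_(k, l)) (N : 'M[R]_(k, q)) (Y : 'M[R]_(l, q)) :
  frob M (N *m Y^T) = frob (M *m Y) N.
Proof. by rewrite /frob mulmxA mxtrace_mulC trmx_mul mulmxA. Qed.

Lemma mxtrace_mulmx_tr k l (U : 'M[R]_(k, l)) : \tr (U *m U^T) = frob U U.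
Proof. by rewrite /frob mxtrace_mulC. Qed.

Lemma frob1l n (X : 'M[R]_n) : frob 1%:M X = \tr X.
Proof. by rewrite /frob trmx1 mul1mx. Qed.

Lemma frob_col n (v w : 'cV[R]_n) : frob v w = (v^T *m w) 0 0.
Proof. by rewrite /frob /mxtrace big_ord1. Qed.

End FrobeniusProducts.

Section QuadraticForm.
Variables (R : realType) (n : nat).
Implicit Types (X Z : 'M[R]_n) (u v w : 'cV[R]_n).

Definition qform X v w := (v^T *m X *m w) 0 0.

Lemma qform_sym X v w : sym_mx X -> qform X v w = qform X w v.
Proof.
move=> sX; rewrite /qform -[in LHS](trmxK (v^T *m X *m w)) mxE.
by rewrite !trmx_mul trmxK sX mulmxA.
Qed.

Lemma qformDr X u v w : qform X u (v + w) = qform X u v + qform X u w.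
Proof. by rewrite /qform mulmxDr mxE. Qed.

Lemma qformZr X u t v : qform X u (t *: v) = t * qform X u v.
Proof. by rewrite /qform -scalemxAr mxE. Qed.

Lemma qform_subZ X Z t v w : qform (X - t *: Z) v w = qform X v w - t * qform Z v w.
Proof. by rewrite /qform mulmxBr mulmxBl -scalemxAr -scalemxAl !mxE. Qed.

Lemma qform_expand X v w t : sym_mx X ->
  qform X (v + t *: w) (v + t *: w) =
  qform X v v + 2 * t * qform X v w + t ^+ 2 * qform X w w.
Proof.
move=> sX; rewrite qformDr qformZr !(qform_sym (v + _)) //.
by rewrite !(qformDr, qformZr) (qform_sym w v) //; ring.
Qed.

Lemma qform_delta X i j : qform X (delta_mx i 0) (delta_mx j 0) = X i j.
Proof. by rewrite /qform trmx_delta -rowE -colE !mxE. Qed.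

Lemma qform_rank1 u v : qform (u *m u^T) v v = (u^T *m v) 0 0 ^+ 2.
Proof.
rewrite /qform mulmxA -mulmxA mxE big_ord1 expr2; congr (_ * _).
by rewrite -[v^T *m u]trmxK trmx_mul trmxK mxE.
Qed.

Lemma sym_mxE X i j : sym_mx X -> X i j = X j i.
Proof. by move=> sX; rewrite -[in LHS]sX mxE. Qed.

Lemma psd_diag_ge0 X i : psd X -> 0 <= X i i.
Proof. by move=> [_ X_ge0]; rewrite -qform_delta; apply: X_ge0. Qed.

Lemma psd_qform_eq0 X v w : psd X -> qform X v v = 0 -> qform X v w = 0.
Proof.
move=> [sX X_ge0] Xv0; set c := qform X v w; set d := qform X w w.
have d1_gt0 : 0 < d + 1 by rewrite ltr_wpDl ?X_ge0.
have := X_ge0 (v + (- c / (d + 1)) *: w).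
rewrite -/(qform _ _ _) qform_expand // Xv0 add0r.
have -> : 2 * (- c / (d + 1)) * c + (- c / (d + 1)) ^+ 2 * d =
    - (c ^+ 2 * (d + 2) / (d + 1) ^+ 2) by field; rewrite gt_eqF.
rewrite oppr_ge0 pmulr_lle0 ?invr_gt0 ?exprn_gt0 // pmulr_lle0 ?ltr_wpDl ?X_ge0 //.
by move=> c2_le0; apply/eqP; rewrite -sqrf_eq0 eq_le c2_le0 sqr_ge0.
Qed.

Lemma psd_diag_eq0 X i j : psd X -> X i i = 0 -> X i j = 0.
Proof. by move=> X_psd Xii; rewrite -qform_delta psd_qform_eq0 ?qform_delta. Qed.

(* One step of symmetric Gaussian elimination.  When X k k = 0 the junk value
   0^-1 = 0 gives pivot X k = X, and u = 0 in pivot_rank1. *)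
Definition pivot X k := X - (X k k)^-1 *: (col k X *m (col k X)^T).

Lemma pivotE X k i j : pivot X k i j = X i j - (X k k)^-1 * (X i k * X j k).
Proof. by rewrite !mxE big_ord1 !mxE. Qed.

Lemma pivot_diag X k : pivot X k k k = 0.
Proof.
rewrite pivotE; have [->|Xk0] := eqVneq (X k k) 0; first by rewrite !mulr0 subr0.
by rewrite mulKf ?subrr.
Qed.

Lemma pivot_diag_eq0 X k i : psd X -> X i i = 0 -> pivot X k i i = 0.
Proof.
by move=> X_psd Xii; rewrite pivotE Xii (psd_diag_eq0 k X_psd Xii) !mulr0 subr0.
Qed.

Lemma psd_pivot X k : psd X -> psd (pivot X k).
Proof.
move=> X_psd; have [sX X_ge0] := X_psd.
split; first by rewrite /sym_mx /pivot linearB linearZ /= trmx_mul trmxK sX.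
move=> v; pose e : 'cV[R]_n := delta_mx k 0; pose a := X k k.
have Xe_v : ((col k X)^T *m v) 0 0 = qform X e v by rewrite colE trmx_mul sX.
rewrite -/(qform _ v v) qform_subZ qform_rank1 Xe_v -/a.
have [a0|a_neq0] := eqVneq a 0; first by rewrite a0 invr0 mul0r subr0; apply: X_ge0.
have := X_ge0 (v + (- qform X e v / a) *: e).
rewrite -/(qform _ _ _) qform_expand // (qform_sym e v) // qform_delta -/a.
by congr (_ <= _); field.
Qed.

Lemma pivot_rank1 X k : psd X ->
  let u := (Num.sqrt (X k k))^-1 *: col k X in X = pivot X k + u *m u^T.
Proof.
move=> X_psd u; rewrite /u linearZ /= -scalemxAl -scalemxAr scalerA -invfM.
by rewrite -expr2 sqr_sqrtr ?psd_diag_ge0 // subrK.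
Qed.

Lemma psd_factor X : psd X -> exists N (L : 'M[R]_(n, N)), X = L *m L^T.
Proof.
(* Pivot out the diagonal entries k = n-1, ..., 0; each pivot is psd, keeps the
   zero diagonal entries and contributes one rank-one column to L. *)
suff factor j Z : psd Z -> (forall i : 'I_n, (j <= i)%N -> Z i i = 0) ->
    exists N (L : 'M[R]_(n, N)), Z = L *m L^T.
  by move=> X_psd; apply: (factor n) => // i; rewrite leqNgt ltn_ord.
elim: j Z => [|j IHj] Z Z_psd Z_diag.
  exists 0%N, 0; apply/matrixP => i k; rewrite mul0mx mxE.
  by rewrite (sym_mxE _ _ (proj1 Z_psd)) psd_diag_eq0 ?Z_diag.
have [j_lt_n|n_le_j] := ltnP j n; last first.
  by apply: IHj => // i; rewrite leqNgt (leq_trans (ltn_ord i)).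
pose k := Ordinal j_lt_n.
have [N [L ZkE]] : exists N (L : 'M[R]_(n, N)), pivot Z k = L *m L^T.
  apply: IHj; first exact: psd_pivot.
  move=> i; rewrite leq_eqVlt => /orP[/eqP ji|lt_ji].
    by rewrite (_ : i = k) ?pivot_diag //; exact: val_inj.
  exact: pivot_diag_eq0 Z_psd (Z_diag i lt_ji).
exists (N + 1)%N, (row_mx L ((Num.sqrt (Z k k))^-1 *: col k Z)).
by rewrite tr_row_mx mul_row_col -ZkE -pivot_rank1.
Qed.

End QuadraticForm.

Section PsdCone.
Variable R : realType.

Lemma frob_psd_ge0 n (P X : 'M[R]_n) : psd P -> psd X -> 0 <= frob P X.
Proof.
move=> [sP P_ge0] /psd_factor[N [L ->]].
rewrite /frob sP mulmxA mxtrace_mulC mulmxA; apply: sumr_ge0 => i _.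
have -> : (L^T *m P *m L) i i = qform P (col i L) (col i L).
  by rewrite -[LHS]qform_delta /qform !colE trmx_mul !mulmxA.
exact: P_ge0.
Qed.

Lemma pd_psd n (X : 'M[R]_n) : pd X -> psd X.
Proof.
move=> [sX X_gt0]; split=> // v.
by have [->|/X_gt0/ltW //] := eqVneq v 0; rewrite mulmx0 mxE.
Qed.

Lemma frob_psd_shift n (S X : 'M[R]_n) c : psd (S + c *: 1%:M) -> psd X ->
  - frob S X <= c * \tr X.
Proof. by move=> /frob_psd_ge0 /[apply]; rewrite frobDl frobZl frob1l; lra. Qed.

Lemma psd_mulmx_tr k l (U : 'M[R]_(k, l)) : psd (U *m U^T).
Proof.
split=> [|v]; first by rewrite /sym_mx trmx_mul trmxK.
by have := frob_ge0 (U^T *m v); rewrite frob_col trmx_mul trmxK !mulmxA.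
Qed.

Lemma qform_le_frob n (W : 'M[R]_n) (w : 'cV[R]_n) :
  `|qform W w w| <= (\sum_i \sum_j `|W i j|) * frob w w.
Proof.
have w2_le i : w i 0 ^+ 2 <= frob w w.
  rewrite frobE (bigD1 i) //= big_ord1 -expr2 lerDl.
  by apply: sumr_ge0 => j _; rewrite big_ord1 -expr2 sqr_ge0.
have ww_le i j : `|w i 0 * w j 0| <= frob w w.
  by move: (w2_le i) (w2_le j); rewrite ler_norml => *; apply/andP; split; nra.
have -> : qform W w w = \sum_i \sum_j W i j * (w i 0 * w j 0).
  rewrite /qform mxE; under eq_bigr => j _ do rewrite mxE mulr_suml.
  rewrite exchange_big; apply: eq_bigr => i _; apply: eq_bigr => j _.
  by rewrite !mxE; ring.
apply: le_trans (ler_norm_sum _ _ _) _; rewrite mulr_suml; apply: ler_sum => i _.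
apply: le_trans (ler_norm_sum _ _ _) _; rewrite mulr_suml; apply: ler_sum => j _.
by rewrite normrM ler_wpM2l.
Qed.

Lemma pd_sub_psd n (X Z : 'M[R]_n) : pd X -> sym_mx Z ->
  exists2 t, 0 < t & psd (X - t *: Z).
Proof.
(* With X = L L^T and L M = 1, v^T Z v is the quadratic form of M Z M^T at
   w = L^T v, and |w|^2 = v^T X v. *)
move=> X_pd sZ; have [sX X_gt0] := X_pd.
have [N [L XE]] := psd_factor (pd_psd X_pd).
have [M LM] : exists M, L *m M = 1%:M.
  apply/row_freeP/inj_row_free => v vL; apply/eqP/negPn/negP => v_neq0.
  have vT_neq0 : v^T != 0 by rewrite trmx_eq0.
  by have := X_gt0 _ vT_neq0; rewrite XE trmxK mulmxA vL !mul0mx mxE ltxx.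
pose W := M *m Z *m M^T; pose K := \sum_i \sum_j `|W i j|.
have K1_gt0 : 0 < K + 1.
  by rewrite ltr_wpDl // sumr_ge0 // => i _; rewrite sumr_ge0.
exists (K + 1)^-1; first by rewrite invr_gt0.
split=> [|v]; first by rewrite /sym_mx linearB linearZ /= sX sZ.
pose w := L^T *m v.
have vE : v = M^T *m w by rewrite mulmxA -trmx_mul LM trmx1 mul1mx.
have Xv : qform X v v = frob w w by rewrite frob_col /qform XE trmx_mul trmxK !mulmxA.
have Zv : qform Z v v = qform W w w by rewrite [in LHS]vE /qform trmx_mul trmxK !mulmxA.
rewrite -/(qform _ v v) qform_subZ Xv Zv subr_ge0 ler_pdivrMl //.
apply: le_trans (ler_norm _) _; apply: le_trans (qform_le_frob _ _) _.
by rewrite ler_wpM2r ?frob_ge0 ?lerDl.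
Qed.

End PsdCone.

Section MxvecRows.
Variables (R : realType) (m k l : nat).
Implicit Types (F : 'I_m -> 'M[R]_(k, l)) (U : 'M[R]_(k, l)).

Definition mxvec_rows F : 'M[R]_(m, k * l) := \matrix_i mxvec (F i).

Lemma mxvec_rowsE F U i : (mxvec_rows F *m (mxvec U)^T) i 0 = frob (F i) U.
Proof. by rewrite frob_mxvec !mxE; apply: eq_bigr => j _; rewrite !mxE. Qed.

Lemma mxvec_comb F (nu : 'cV[R]_m) :
  mxvec (\sum_i nu i 0 *: F i) = nu^T *m mxvec_rows F.
Proof.
rewrite mulmx_sum_row linear_sum; apply: eq_bigr => i _.
by rewrite linearZ rowK mxE.
Qed.

End MxvecRows.

Section Constraints.
Variables (R : realType) (n m : nat) (A : 'I_m -> 'M[R]_n).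

Fact calA_is_linear : linear (calA A).
Proof. by move=> t X Z; apply/matrixP => i j; rewrite !mxE linearP. Qed.

HB.instance Definition _ :=
  GRing.isLinear.Build R 'M[R]_n 'cV[R]_m _ (calA A) calA_is_linear.

Lemma calA_mxvec X : calA A X = mxvec_rows A *m (mxvec X)^T.
Proof. by apply/matrixP => i j; rewrite [j]ord1 mxvec_rowsE mxE. Qed.

Lemma mxvec_calA_adj nu : mxvec (calA_adj A nu) = nu^T *m mxvec_rows A.
Proof. exact: mxvec_comb. Qed.

Lemma frob_calA_adj nu X : frob (calA_adj A nu) X = (nu^T *m calA A X) 0 0.
Proof.
rewrite /calA_adj frob_suml mxE; apply: eq_bigr => i _.
by rewrite frobZl !mxE.
Qed.

Lemma calA_adj_onto X : (forall Z, calA A Z = 0 -> frob X Z = 0) ->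
  exists nu, calA_adj A nu = X.
Proof.
(* The columns of cokermx (mxvec_rows A) span ker A in vectorized form, so
   X orthogonal to ker A puts mxvec X in the row space of mxvec_rows A. *)
move=> X_orth; pose K := cokermx (mxvec_rows A).
have XK0 : mxvec X *m K = 0.
  apply/matrixP => i j; rewrite [i]ord1 [RHS]mxE.
  pose Z := vec_mx (col j K)^T.
  have ZK : (mxvec Z)^T = col j K by rewrite vec_mxK trmxK.
  have AZ0 : calA A Z = 0 by rewrite calA_mxvec ZK colE mulmxA mulmx_coker mul0mx.
  have := X_orth Z AZ0; rewrite frob_mxvec ZK colE mulmxA -colE.
  by rewrite mxE.
have /submxP[D XD] : (mxvec X <= mxvec_rows A)%MS by rewrite submxE XK0.
by exists D^T; apply: (can_inj mxvecK); rewrite mxvec_calA_adj trmxK XD.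
Qed.

Lemma calA_adj_onto_sym X : (forall i, sym_mx (A i)) -> sym_mx X ->
  (forall Z, sym_mx Z -> calA A Z = 0 -> frob X Z = 0) ->
  exists nu, calA_adj A nu = X.
Proof.
move=> sA sX X_orth; apply: calA_adj_onto => Z AZ0.
have frob_tr (U : 'M[R]_n) : sym_mx U -> frob U Z^T = frob U Z.
  by move=> sU; rewrite /frob -trmx_mul mxtrace_tr mxtrace_mulC sU.
have AZT : calA A Z^T = calA A Z by apply/matrixP => i j; rewrite !mxE frob_tr.
have AZT0 : calA A (Z + Z^T) = 0 by rewrite linearD /= AZT AZ0 addr0.
have sZZT : sym_mx (Z + Z^T) by rewrite /sym_mx linearD /= trmxK addrC.
by have := X_orth _ sZZT AZT0; rewrite linearD /= frob_tr //; lra.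
Qed.

Lemma calA_adj_eq1_of_const_trace (b : 'cV[R]_m) : (forall i, sym_mx (A i)) ->
  (forall X X', feas A b X -> feas A b X' -> \tr X = \tr X') ->
  (exists2 X, feas A b X & pd X) -> exists nu, calA_adj A nu = 1%:M.
Proof.
move=> sA tr_const [X0 [AX0 _] X0_pd].
apply: calA_adj_onto_sym => // [|Z sZ AZ0]; first by rewrite /sym_mx trmx1.
have [t t_gt0 X0tZ_psd] := pd_sub_psd X0_pd sZ.
have X0tZ_feas : feas A b (X0 - t *: Z).
  by split=> //; rewrite linearB linearZ /= AZ0 scaler0 subr0.
have := tr_const _ _ X0tZ_feas (conj AX0 (pd_psd X0_pd)).
rewrite linearB linearZ /= => trE.
have /eqP : t * \tr Z = 0 by lra.
by rewrite mulf_eq0 gt_eqF //= frob1l => /eqP.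
Qed.

End Constraints.

Section PseudoInverse.
Variable R : realType.

Lemma pinv_gram_mulmx k N (B : 'M[R]_(k, N)) Gd :
  is_mp_pinv (B *m B^T) Gd -> B *m B^T *m Gd *m B = B.
Proof.
(* Only two Penrose conditions are used: Q := 1 - G Gd satisfies Q G = 0 and
   Q^T = Q, so (Q B) (Q B)^T = Q G Q = 0. *)
case=> GGdG _ GGd_sym _; set G := B *m B^T in GGdG GGd_sym *.
pose Q := 1%:M - G *m Gd.
have QG0 : Q *m G = 0 by rewrite mulmxBl mul1mx GGdG subrr.
have QT : Q^T = Q by rewrite linearB /= trmx1 GGd_sym.
have /eqP : frob (Q *m B) (Q *m B) = 0.
  by rewrite -mxtrace_mulmx_tr trmx_mul !mulmxA -(mulmxA Q) QG0 mul0mx linear0.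
by rewrite frob_eq0 mulmxBl mul1mx subr_eq0 => /eqP <-.
Qed.

End PseudoInverse.

Section DualCertificate.
Variables (R : realType) (n m p : nat) (A : 'I_m -> 'M[R]_n) (C : 'M[R]_n).
Variables (Y : 'M[R]_(n, p)) (Gd : 'M[R]_m).
Let S := Smat A C Y Gd.

Lemma gram_mxvec : gram A Y = AYmx A Y *m (AYmx A Y)^T.
Proof.
apply/matrixP => i j; rewrite mxE -(mxvec_rowsE (fun i => A i *m Y)) !mxE.
by apply: eq_bigr => k _; rewrite !mxE.
Qed.

Lemma mxvec_calA_adj_mulmx nu : mxvec (calA_adj A nu *m Y) = nu^T *m AYmx A Y.
Proof.
rewrite -mxvec_comb mulmx_suml; congr mxvec.
by apply: eq_bigr => i _; rewrite scalemxAl.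
Qed.

Lemma Smat_orthogonal : is_mp_pinv (gram A Y) Gd ->
  AYmx A Y *m (mxvec (S *m Y))^T = 0.
Proof.
rewrite gram_mxvec => /pinv_gram_mulmx GGdB; set B := AYmx A Y in GGdB *.
have AC : calA A (C *m Y *m Y^T) = B *m (mxvec (C *m Y))^T.
  by apply/matrixP => i j; rewrite [j]ord1 mxvec_rowsE mxE frob_mulmx_tr.
rewrite /S /Smat mulmxBl linearB /= mxvec_calA_adj_mulmx linearB /=.
by rewrite trmx_mul trmxK mulmxBr AC !mulmxA GGdB subrr.
Qed.

Lemma frob_Smat_mulmx_eq0 nu : calA_adj A nu = 1%:M -> is_mp_pinv (gram A Y) Gd ->
  frob (S *m Y) Y = 0.
Proof.
move=> A_nu /Smat_orthogonal SY_orth.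
rewrite frobC frob_mxvec -[Y in mxvec Y]mul1mx -A_nu mxvec_calA_adj_mulmx.
by rewrite -mulmxA SY_orth mulmx0 mxE.
Qed.

Lemma Smat_gap (b : 'cV[R]_m) X : Mp A b Y -> calA A X = b ->
  gobj C Y - frob C X = frob (S *m Y) Y - frob S X.
Proof.
move=> AYY AX; pose mu := Gd *m calA A (C *m Y *m Y^T).
have frobS Z : calA A Z = b -> frob S Z = frob C Z - (mu^T *m b) 0 0.
  by move=> AZ; rewrite /S /Smat frobBl frob_calA_adj AZ.
by rewrite /gobj -!frob_mulmx_tr !frobS //; ring.
Qed.

Lemma frob_rgrad_le : 2 * frob (S *m Y) Y <= frob_norm (rgrad A C Y Gd) * frob_norm Y.
Proof. by rewrite -frobZl; apply: frob_CauchySchwarz. Qed.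

End DualCertificate.

Theorem lemma4 (R : realType) (n m p : nat) (A : 'I_m -> 'M[R]_n) (b : 'cV[R]_m)
  (C : 'M[R]_n) (fstar Rtr : R) :
  (forall i, sym_mx (A i)) -> sym_mx C ->
  assumption1 p A b ->
  feas A b !=set0 ->
  compact (feas A b) ->
  (* fstar is the optimal value of (SDP) *)
  (exists2 X, feas A b X & frob C X = fstar) ->
  (forall X, feas A b X -> fstar <= frob C X) ->
  (* Rtr = max of the trace over the feasible set *)
  (exists2 X, feas A b X & \tr X = Rtr) ->
  (forall X, feas A b X -> \tr X <= Rtr) ->
  forall (eps_g eps_H : R), 0 <= eps_g -> 0 <= eps_H ->
  forall (Y : 'M[R]_(n, p)) (Gd : 'M[R]_m), Mp A b Y -> is_mp_pinv (gram A Y) Gd ->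
  frob_norm (rgrad A C Y Gd) <= eps_g ->
  psd (Smat A C Y Gd + (eps_H / 2) *: 1%:M) ->
  [/\ 0 <= 2 * (gobj C Y - fstar),
      2 * (gobj C Y - fstar) <= eps_H * Rtr + eps_g * Num.sqrt Rtr,
      (exists nu, calA_adj A nu = 1%:M) -> 2 * (gobj C Y - fstar) <= eps_H * Rtr
    & ((forall X X', feas A b X -> feas A b X' -> \tr X = \tr X') ->
       (exists2 X, feas A b X & pd X) ->
       exists nu, calA_adj A nu = 1%:M)].
Proof.
(* Assumption 1, compactness and non-emptiness only serve to make fstar and Rtr
   exist, which the hypotheses grant directly. *)
move=> sA _ _ _ _ [Xs [AXs Xs_psd] <-] fstar_min _ tr_max eps_g eps_H eg_ge0 eH_ge0.
move=> Y Gd AYY Gd_pinv grad_le S_psd.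
have YY_feas : feas A b (Y *m Y^T) by split; [exact: AYY | exact: psd_mulmx_tr].
have gap := Smat_gap C Gd AYY AXs.
have S_Xs : - frob (Smat A C Y Gd) Xs <= eps_H / 2 * Rtr.
  apply: le_trans (frob_psd_shift S_psd Xs_psd) _.
  by rewrite ler_wpM2l ?divr_ge0 ?tr_max.
have YY_le : frob Y Y <= Rtr by rewrite -mxtrace_mulmx_tr tr_max.
have normY : frob_norm Y <= Num.sqrt Rtr.
  by rewrite ler_sqrt // (le_trans (frob_ge0 Y)).
have SY_Y : 2 * frob (Smat A C Y Gd *m Y) Y <= eps_g * Num.sqrt Rtr.
  apply: le_trans (frob_rgrad_le A C Y Gd) _.
  by apply: ler_pM; rewrite ?frob_norm_ge0.
split.
- by have := fstar_min _ YY_feas; rewrite /gobj -frob_mulmx_tr; lra.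
- by rewrite gap; lra.
- by move=> [nu /(frob_Smat_mulmx_eq0 C)/(_ Gd_pinv) SY0]; rewrite gap SY0; lra.
- exact: calA_adj_eq1_of_const_trace.
Qed.
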